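(* Let $(\mathcal{F}_\alpha)_{\alpha<\omega_1}$ be a transfinite family. For every $\alpha<\omega_1$ and every infinite $L\subset\mathbb{N}$, $\mathbb{I}(\mathcal{F}_\alpha,L)=\alpha$.
   Context: An approximating family assigns to each countable limit ordinal $\alpha$ finite sets $A_n(\alpha)\subset[0,\alpha)$, $n\in\mathbb{N}$, with $A_n(\alpha)\subset A_{n+1}(\alpha)$ and $\lim_n\max A_n(\alpha)=\alpha$. The transfinite family it defines: $\mathcal{F}_0=\{\emptyset\}$; $\mathcal{F}_{\beta+1}=\{\{n\}\cup E:n\in\mathbb{N},E\in\mathcal{F}_\beta\}\cup\{\emptyset\}$; for limit $\alpha$, $\mathcal{F}_\alpha=\{\emptyset\}\cup\{E\ne\emptyset:E\in\bigcup_{\beta\in A_{\min E}(\alpha)}\mathcal{F}_\beta\}$. For $N=\{n_1<n_2<\dots\}$, $\mathcal{F}^N=\{\{n_i:i\in E\}:E\in\mathcal{F}\}$. A hereditary set $\mathcal{A}$ of finite subsets of $\mathbb{N}$ is $\alpha$-large on an infinite $P$ if for every infinite $M\subset P$ there is an infinite $N\subset M$ with $\mathcal{F}_\alpha^N\subset\mathcal{A}$ (independent of the approximating family); $\mathbb{I}(\mathcal{A},P)=\sup\{\alpha<\omega_1:\mathcal{A}\text{ is }\alpha\text{-large on }P\}$. *)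

From HB Require Import structures.
From Stdlib Require List.
From mathcomp Require Import all_boot finmap.
Set Implicit Arguments. Unset Strict Implicit. Unset Printing Implicit Defensive.
Local Open Scope fset_scope.

(* The ordinals below omega_1 are modelled abstractly by a type [O] with a
   strict relation [lt] which is a well-order in which every element has only
   countably many predecessors (so every element is a countable ordinal). *)
Definition countable_wellorder (O : Type) (lt : O -> O -> Prop) : Prop :=
  [/\ (forall a, ~ lt a a),
      (forall a b c, lt a b -> lt b c -> lt a c),
      (forall a b, lt a b \/ a = b \/ lt b a),
      well_founded lt &
      (forall a, exists f : O -> nat,
          forall x y, lt x a -> lt y a -> f x = f y -> x = y)].

Definition is_zero (O : Type) (lt : O -> O -> Prop) (a : O) : Prop :=
  forall b, ~ lt b a.

Definition is_succ_of (O : Type) (lt : O -> O -> Prop) (a b : O) : Prop :=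
  lt b a /\ forall c, lt c a -> c = b \/ lt c b.

Definition is_limit (O : Type) (lt : O -> O -> Prop) (a : O) : Prop :=
  ~ is_zero lt a /\ ~ (exists b, is_succ_of lt a b).

(* A a n = A_n(a), a finite subset of [0,a), given as a list. *)
Definition approx_family (O : Type) (lt : O -> O -> Prop)
    (A : O -> nat -> seq O) : Prop :=
  forall a, is_limit lt a ->
    [/\ (forall n b, List.In b (A a n) -> lt b a),
        (forall n b, List.In b (A a n) -> List.In b (A a n.+1)) &
        (* lim_n max A_n(a) = a (order topology) *)
        (forall b, lt b a -> exists N, forall n, N <= n ->
            exists c, List.In c (A a n) /\ lt b c)].

Definition transfinite_family (O : Type) (lt : O -> O -> Prop)
    (A : O -> nat -> seq O) (F : O -> {fset nat} -> Prop) : Prop :=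
  (forall a, is_zero lt a -> forall E, F a E <-> E = fset0) /\
  (forall a b, is_succ_of lt a b -> forall E,
      F a E <-> (E = fset0 \/ exists n E', F b E' /\ E = n |` E')) /\
  (forall a, is_limit lt a -> forall E,
      F a E <-> (E = fset0 \/
                 exists k, [/\ k \in E, (forall x, x \in E -> k <= x) &
                               exists b, List.In b (A a k) /\ F b E])).

Definition infinite_set (P : nat -> Prop) : Prop :=
  forall m, exists n, m <= n /\ P n.

(* infinite subsets of N are represented by their increasing enumerations *)
Definition incr (e : nat -> nat) : Prop := forall i, e i < e i.+1.

(* F^N = { {n_i : i in E} : E in F } *)
Definition fam_image (e : nat -> nat) (E : {fset nat}) : {fset nat} :=
  [fset e i | i in E].

Definition large (O : Type) (G : O -> {fset nat} -> Prop) (a : O)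
    (Aset : {fset nat} -> Prop) (P : nat -> Prop) : Prop :=
  forall m, incr m -> (forall i, P (m i)) ->
    exists n, [/\ incr n, (forall i, exists j, n i = m j) &
                  forall E, G a E -> Aset (fam_image n E)].

Definition is_sup (O : Type) (lt : O -> O -> Prop) (S : O -> Prop) (a : O)
  : Prop :=
  (forall b, S b -> ~ lt a b) /\
  (forall c, (forall b, S b -> ~ lt c b) -> ~ lt c a).

From HB Require Import structures.
From mathcomp Require Import all_boot finmap.
From Stdlib Require Import Classical ClassicalEpsilon.
Set Implicit Arguments. Unset Strict Implicit.
Local Open Scope fset_scope.

(* The index is read off a Cantor-Bendixson type rank: [rank_ge Fam E c] says
   that for every [b < c] infinitely many [j] extend [E] to a set [j |` E] of
   rank [b].  In [F_d] the empty set has rank exactly [d]: at least [d] by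
   unfolding the recursion, and no singleton has rank [d] (at a successor,
   deleting the minimum lands in the predecessor family; at a limit, a set
   with minimum [k] lies in one of the finitely many families indexed by
   [A_d(k)], and rank is preserved by one of the parts of a finite cover).
   Rank transfers along images under increasing maps, so if [F_a] were
   [b]-large for some [b > a], the rank [b] of the empty set in [G_b] would
   transfer to [F_a].  Conversely [G_a^N] is contained in [F_a] once [N]
   grows fast enough, which makes [F_a] [a]-large. *)

Lemma infinite_set_sub (P Q : nat -> Prop) :
  (forall j, P j -> Q j) -> infinite_set P -> infinite_set Q.
Proof. by move=> PQ infP m; have [n [mn /PQ]] := infP m; exists n. Qed.

Lemma infinite_set_enum (P : nat -> Prop) :
  infinite_set P -> exists m, incr m /\ forall i, P (m i).
Proof.
move=> infP; have [next next_spec] := choice (fun m n => m <= n /\ P n) infP.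
pose fix m i := if i is i'.+1 then next (m i').+1 else next 0.
exists m; split=> [i|[|i]] /=; first exact: (next_spec _).1.
- exact: (next_spec _).2.
- exact: (next_spec _).2.
Qed.

Lemma infinite_set_or (P Q : nat -> Prop) :
  infinite_set (fun j => P j \/ Q j) -> infinite_set P \/ infinite_set Q.
Proof.
move=> infPQ; apply: NNPP => /not_or_and [/not_all_ex_not [mP finP]].
move=> /not_all_ex_not [mQ finQ].
have [n [le_mn [Pn|Qn]]] := infPQ (maxn mP mQ).
- by apply: finP; exists n; rewrite (leq_trans (leq_maxl _ _) le_mn).
- by apply: finQ; exists n; rewrite (leq_trans (leq_maxr _ _) le_mn).
Qed.

Lemma incr_ge (m : nat -> nat) : incr m -> forall i, i <= m i.
Proof. by move=> incr_m; elim=> // i IHi; apply: leq_ltn_trans IHi (incr_m i). Qed.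

Lemma incr_above (phi : nat -> nat) : exists psi, incr psi /\ forall i, phi i <= psi i.
Proof.
pose fix psi i := if i is i'.+1 then maxn (psi i').+1 (phi i) else phi 0.
by exists psi; split=> [i|[|i]] /=; rewrite ?leq_maxl ?leq_maxr.
Qed.

Lemma leq_bigmax_In (T : Type) (s : seq T) (f : T -> nat) x :
  List.In x s -> f x <= \max_(y <- s) f y.
Proof.
elim: s => [|y s IHs] //= [->|/IHs le_x]; rewrite big_cons ?leq_maxl //.
exact: leq_trans le_x (leq_maxr _ _).
Qed.

Lemma fam_image0 (n : nat -> nat) : fam_image n fset0 = fset0.
Proof. exact: imfset0. Qed.

Lemma fam_imageU1 (n : nat -> nat) j (X : {fset nat}) :
  fam_image n (j |` X) = n j |` fam_image n X.
Proof. exact: imfsetU1. Qed.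

Section TransfiniteFamilies.

Variables (O : Type) (lt : O -> O -> Prop).
Hypothesis lt_trans : forall a b c, lt a b -> lt b c -> lt a c.
Hypothesis lt_total : forall a b, lt a b \/ a = b \/ lt b a.
Hypothesis lt_irrefl : forall a, ~ lt a a.
Hypothesis lt_wf : well_founded lt.

(* The sets [S b] of admissible extensions are constructor arguments, so the
   recursive occurrence is strictly positive and induction gets a usable
   hypothesis; [rank_geP] gives the intended reading. *)
Inductive rank_ge (Fam : {fset nat} -> Prop) : {fset nat} -> O -> Prop :=
  RankGe E c (S : O -> nat -> Prop) of
    Fam E & (forall b, lt b c -> infinite_set (S b)) &
    (forall b j, lt b c -> S b j -> rank_ge Fam (j |` E) b) : rank_ge Fam E c.

Lemma rank_geP Fam E c :
  rank_ge Fam E c <->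
  Fam E /\ forall b, lt b c -> infinite_set (fun j => rank_ge Fam (j |` E) b).
Proof.
split=> [[{}E {}c S FE infS rankS]|[FE infR]]; last exact: RankGe infR _.
by split=> // b ltbc; apply: infinite_set_sub (infS b ltbc) => j; apply: rankS.
Qed.

Lemma rank_ge_lower Fam E c c' :
  (forall b, lt b c' -> lt b c) -> rank_ge Fam E c -> rank_ge Fam E c'.
Proof. by move=> le_c'c /rank_geP[FE infR]; apply/rank_geP; split=> // b /le_c'c/infR. Qed.

Lemma rank_ge_sub (Fam1 Fam2 : {fset nat} -> Prop) E c :
  (forall X, Fam1 X -> Fam2 X) -> rank_ge Fam1 E c -> rank_ge Fam2 E c.
Proof.
move=> sub12; elim=> {}E {}c S /sub12 FE infS _ IH.
exact: RankGe FE infS IH.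
Qed.

Lemma rank_ge_transport (Fam1 Fam2 : {fset nat} -> Prop) f g E c :
  (forall X, Fam1 X -> Fam2 (f X)) ->
  (forall X, exists M, forall j, M <= j -> f (j |` X) = g j |` f X /\ j <= g j) ->
  rank_ge Fam1 E c -> rank_ge Fam2 (f E) c.
Proof.
move=> fam_f f_add; elim=> {}E {}c S FE infS _ IH.
have [M f_addE] := f_add E.
apply: (RankGe (S := fun b y => exists2 j, M <= j /\ S b j & y = g j)).
- exact: fam_f.
- move=> b ltbc N; have [j [le_Nj Sj]] := infS b ltbc (maxn N M).
  have [_ le_jg] := f_addE j (leq_trans (leq_maxr _ _) le_Nj).
  have le_Mj := leq_trans (leq_maxr _ _) le_Nj.
  exists (g j); split; last by exists j.
  exact: leq_trans (leq_maxl _ _) (leq_trans le_Nj le_jg).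
- move=> b _ ltbc [j [le_Mj Sj] ->].
  by rewrite -(f_addE j le_Mj).1; apply: IH.
Qed.

Lemma rank_ge_restrict (P : {fset nat} -> Prop) M Fam E c :
  P E -> (forall X j, P X -> M <= j -> P (j |` X)) ->
  rank_ge Fam E c -> rank_ge (fun X => Fam X /\ P X) E c.
Proof.
move=> PE P_add rankE; elim: rankE PE => {}E {}c S FE infS _ IH PE.
apply: (RankGe (S := fun b j => M <= j /\ S b j)) => //.
- move=> b ltbc N; have [j [le_Nj Sj]] := infS b ltbc (maxn N M).
  exists j; split; first exact: leq_trans (leq_maxl _ _) le_Nj.
  by split=> //; apply: leq_trans (leq_maxr _ _) le_Nj.
- by move=> b j ltbc [le_Mj Sj]; apply: IH => //; apply: P_add.
Qed.

Lemma down_closed_cover (P Q : O -> Prop) c :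
  (forall b b', lt b' b -> P b -> P b') ->
  (forall b b', lt b' b -> Q b -> Q b') ->
  (forall b, lt b c -> P b \/ Q b) ->
  (forall b, lt b c -> P b) \/ (forall b, lt b c -> Q b).
Proof.
move=> downP downQ coverPQ; apply: NNPP => /not_or_and[notP notQ].
have [b1 /(imply_to_and (lt b1 c)) [ltb1c nPb1]] := not_all_ex_not _ _ notP.
have [b2 /(imply_to_and (lt b2 c)) [ltb2c nQb2]] := not_all_ex_not _ _ notQ.
have [lt12|[eq12|lt21]] := lt_total b1 b2.
- by case: (coverPQ b2 ltb2c) => // /(downP _ _ lt12).
- by subst b2; case: (coverPQ b1 ltb1c).
- by case: (coverPQ b1 ltb1c) => // /(downQ _ _ lt21).
Qed.

Lemma rank_ge_split (Fam Fam1 Fam2 : {fset nat} -> Prop) E c :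
  (forall X, Fam X -> Fam1 X \/ Fam2 X) ->
  (forall X j, Fam1 (j |` X) -> Fam1 X) -> (forall X j, Fam2 (j |` X) -> Fam2 X) ->
  rank_ge Fam E c -> rank_ge Fam1 E c \/ rank_ge Fam2 E c.
Proof.
move=> cover12 hered1 hered2; elim=> {}E {}c S FE infS _ IH.
pose I Fi b := infinite_set (fun j => rank_ge Fi (j |` E) b).
have I_down Fi b b' : lt b' b -> I Fi b -> I Fi b'.
  move=> ltb'b; apply: infinite_set_sub => j.
  by apply: rank_ge_lower => x /lt_trans; apply.
have [[b0 ltb0c]|noPred] := classic (exists b, lt b c); last first.
  have vacuous Fi : forall b, lt b c -> I Fi b by move=> b ltbc; case: noPred; exists b.
  by case: (cover12 E FE) => FiE; [left|right]; apply/rank_geP; split=> // b; apply: vacuous.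
have cover b : lt b c -> I Fam1 b \/ I Fam2 b.
  move=> ltbc; apply: infinite_set_or.
  by apply: infinite_set_sub (infS b ltbc) => j /(IH b j ltbc).
case: (down_closed_cover (I_down Fam1) (I_down Fam2) cover) => allI; [left|right];
  apply/rank_geP; split=> //; have [j [_ /rank_geP[FjE _]]] := allI b0 ltb0c 0.
- exact: hered1 FjE.
- exact: hered2 FjE.
Qed.

Lemma rank_ge_split_seq (I : Type) (s : seq I) (Fam : {fset nat} -> Prop)
    (Fi : I -> {fset nat} -> Prop) E c :
  (forall i X j, Fi i (j |` X) -> Fi i X) ->
  (forall X, Fam X -> exists i, List.In i s /\ Fi i X) ->
  rank_ge Fam E c -> exists i, List.In i s /\ rank_ge (Fi i) E c.
Proof.
move=> hered; elim: s Fam => [|i s IHs] Fam cover rankE.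
  by have /rank_geP[/cover[? []]] := rankE.
pose Fs X := exists i', List.In i' s /\ Fi i' X.
have cover' X : Fam X -> Fi i X \/ Fs X.
  by move=> /cover[i' [[<-|s_i'] Fi'X]]; [left|right; exists i'].
have hereds X j : Fs (j |` X) -> Fs X.
  by move=> [i' [s_i' /hered Fi'X]]; exists i'.
case: (rank_ge_split cover' (@hered i) hereds rankE) => [rank_i|rank_s].
  by exists i; split=> //; left.
by have [i' [s_i' ?]] := IHs Fs (fun X => id) rank_s; exists i'; split=> //; right.
Qed.

Lemma rank_ge_empty_bound Fam d c :
  (forall k c', rank_ge Fam [fset k] c' -> lt c' d) ->
  rank_ge Fam fset0 c -> ~ lt d c.
Proof.
move=> singleton_lt /rank_geP[_ infR] ltdc.
have [j [_]] := infR d ltdc 0; rewrite fsetU0 => /singleton_lt.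
exact: lt_irrefl.
Qed.

Definition least (k : nat) (X : {fset nat}) := k \in X /\ forall x, x \in X -> k <= x.

Lemma least_fset1 k : least k [fset k].
Proof. by split=> [|x]; rewrite inE // => /eqP->. Qed.

Lemma least_fsetU1 k j X : least k X -> k <= j -> least k (j |` X).
Proof.
by move=> [kX minX] le_kj; split=> [|x]; rewrite !inE ?kX ?orbT // => /orP[/eqP->|/minX].
Qed.

Lemma exists_least (X : {fset nat}) x : x \in X -> exists k, least k X.
Proof. by move=> Xx; have [k Xk minX] := ex_minnP (ex_intro (fun k => k \in X) x Xx); exists k. Qed.

Lemma zero_succ_or_limit a : is_zero lt a \/ (exists b, is_succ_of lt a b) \/ is_limit lt a.
Proof.
have [|nzero] := classic (is_zero lt a); first by left.
right; have [|nsucc] := classic (exists b, is_succ_of lt a b); first by left.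
by right; split.
Qed.

Section Family.

Variables (A : O -> nat -> seq O) (F : O -> {fset nat} -> Prop).
Hypothesis hA : approx_family lt A.
Hypothesis hF : transfinite_family lt A F.

Lemma approx_mono a b n n' :
  is_limit lt a -> List.In b (A a n) -> n <= n' -> List.In b (A a n').
Proof.
move=> lim_a Ab /subnK <-; have [_ A_step _] := hA lim_a.
by elim: (n' - n) => [|i IHi] //; rewrite addSn; apply: A_step.
Qed.

Lemma approx_lt a b n : is_limit lt a -> List.In b (A a n) -> lt b a.
Proof. by move=> /hA[A_lt _ _]; apply: A_lt. Qed.

Lemma F_empty a : F a fset0.
Proof.
have [Fzero [Fsucc Flim]] := hF.
have [zero_a|[[b succ_ab]|lim_a]] := zero_succ_or_limit a.
- exact/(Fzero a zero_a).
- by apply/(Fsucc a b succ_ab); left.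
- by apply/(Flim a lim_a); left.
Qed.

Lemma F_succ_add a b n (X : {fset nat}) : is_succ_of lt a b -> F b X -> F a (n |` X).
Proof. by move=> succ_ab FX; apply/(hF.2.1 a b succ_ab); right; exists n, X. Qed.

Lemma F_succ_incl a b (X : {fset nat}) : is_succ_of lt a b -> F b X -> F a X.
Proof.
move=> succ_ab FX; have [/eqP->|/fset0Pn[x Xx]] := boolP (X == fset0).
  exact: F_empty.
by rewrite -(mem_fset1U Xx); apply: F_succ_add succ_ab FX.
Qed.

Lemma F_limit_intro a (X : {fset nat}) N c :
  is_limit lt a -> (forall x, x \in X -> N <= x) -> List.In c (A a N) -> F c X ->
  F a X.
Proof.
move=> lim_a geX Ac FX; apply/(hF.2.2 a lim_a).
have [/eqP->|/fset0Pn[x /exists_least[k [Xk minX]]]] := boolP (X == fset0).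
  by left.
right; exists k; split=> //; exists c; split=> //.
exact: approx_mono Ac (geX k Xk).
Qed.

Lemma F_limit_least a (X : {fset nat}) k :
  is_limit lt a -> F a X -> least k X -> exists2 b, List.In b (A a k) & F b X.
Proof.
move=> lim_a /(hF.2.2 a lim_a)[->|[k' [Xk' minX' [b [Ab FX]]]]] [Xk minX].
  by rewrite inE in Xk.
suff <- : k' = k by exists b.
by apply/eqP; rewrite eqn_leq minX' ?minX.
Qed.

Lemma F_sub a (Y Z : {fset nat}) : F a Y -> Z `<=` Y -> F a Z.
Proof.
elim/(well_founded_ind lt_wf): a Y Z => a IH Y Z FY subZY.
have [/eqP->|/fset0Pn[z Zz]] := boolP (Z == fset0); first exact: F_empty.
have Yz := fsubsetP subZY z Zz.
have [zero_a|[[b succ_ab]|lim_a]] := zero_succ_or_limit a.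
- by rewrite ((hF.1 a zero_a Y).1 FY) inE in Yz.
- case: ((hF.2.1 a b succ_ab Y).1 FY) => [Y0|[n [Y' [FY' defY]]]].
    by rewrite Y0 inE in Yz.
  have subZY' : Z `\ n `<=` Y'.
    apply/fsubsetP => x; rewrite inE => /andP[xn /(fsubsetP subZY)].
    by rewrite defY inE (negbTE xn).
  have [Zn|Zn] := boolP (n \in Z).
    by rewrite -(fsetD1K Zn); apply: F_succ_add succ_ab (IH b succ_ab.1 _ _ FY' subZY').
  apply: F_succ_incl succ_ab (IH b succ_ab.1 _ _ FY' _).
  by rewrite mem_fsetD1 in subZY'.
- have [k [Yk minY]] := exists_least Yz.
  have [b Ab FY'] := F_limit_least lim_a FY (conj Yk minY).
  have FZ := IH b (approx_lt lim_a Ab) _ _ FY' subZY.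
  by apply: F_limit_intro lim_a _ Ab FZ => x /(fsubsetP subZY)/minY.
Qed.

Lemma F_spread a (Y : {fset nat}) m n :
  F a Y -> m \in Y -> m < n -> n \notin Y -> F a (n |` (Y `\ m)).
Proof.
elim/(well_founded_ind lt_wf): a Y => a IH Y FY Ym lt_mn Yn.
have [zero_a|[[b succ_ab]|lim_a]] := zero_succ_or_limit a.
- by rewrite ((hF.1 a zero_a Y).1 FY) inE in Ym.
- case: ((hF.2.1 a b succ_ab Y).1 FY) => [Y0|[p [Y' [FY' defY]]]].
    by rewrite Y0 inE in Ym.
  have [<-|neq_pm] := eqVneq p m.
    have -> : Y `\ p = Y' `\ p.
      by apply/fsetP => x; rewrite defY !inE; case: eqP.
    exact: F_succ_add succ_ab (F_sub FY' (fsubD1set _ _)).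
  have Y'm : m \in Y' by move: Ym; rewrite defY !inE eq_sym (negbTE neq_pm).
  have Y'n : n \notin Y' by apply: contra Yn; rewrite defY !inE => ->; rewrite orbT.
  have -> : n |` (Y `\ m) = p |` (n |` (Y' `\ m)).
    apply/fsetP => x; rewrite defY !inE orbCA.
    by case: (eqVneq x m) => // ->; rewrite [m == p]eq_sym (negbTE neq_pm) /= !orbF.
  exact: F_succ_add succ_ab (IH b succ_ab.1 _ FY' Y'm lt_mn Y'n).
- have [k [Yk minY]] := exists_least Ym.
  have [b Ab FY'] := F_limit_least lim_a FY (conj Yk minY).
  apply: F_limit_intro lim_a _ Ab (IH b (approx_lt lim_a Ab) _ FY' Ym lt_mn Yn).
  move=> x; rewrite !inE => /orP[/eqP->|/andP[_ /minY //]].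
  exact: leq_trans (minY m Ym) (ltnW lt_mn).
Qed.

Lemma F_succ_behead a b (X : {fset nat}) k :
  is_succ_of lt a b -> F a X -> least k X -> F b (X `\ k).
Proof.
move=> succ_ab FX [Xk minX].
case: ((hF.2.1 a b succ_ab X).1 FX) => [X0|[p [X' [FX' defX]]]].
  by rewrite X0 inE in Xk.
have [pk_or_X'p|] := boolP ((p == k) || (p \in X')).
  apply: F_sub FX' _; apply/fsubsetP => x; rewrite defX !inE.
  case/andP=> neq_xk /orP[/eqP eq_xp|] //.
  by move: pk_or_X'p; rewrite -eq_xp (negbTE neq_xk).
rewrite negb_or => /andP[neq_pk X'p].
have X'k : k \in X' by move: Xk; rewrite defX !inE eq_sym (negbTE neq_pk).
have lt_kp : k < p by rewrite ltn_neqAle eq_sym neq_pk minX // defX !inE eqxx.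
suff -> : X `\ k = p |` (X' `\ k) by apply: F_spread.
apply/fsetP => x; rewrite defX !inE.
by case: (eqVneq x k) => [->|//]; rewrite eq_sym (negbTE neq_pk).
Qed.

Lemma F_tail_incl a b :
  lt b a -> exists N, forall X, F b X -> (forall x, x \in X -> N <= x) -> F a X.
Proof.
elim/(well_founded_ind lt_wf): a b => a IH b ltba.
have [zero_a|[[e [ltea pred_e]]|lim_a]] := zero_succ_or_limit a.
- by case: (zero_a b).
- have succ_ae : is_succ_of lt a e by [].
  case: (pred_e b ltba) => [->|ltbe].
    by exists 0 => X FX _; apply: F_succ_incl succ_ae FX.
  have [N tail_be] := IH e ltea b ltbe.
  by exists N => X FX geX; apply: F_succ_incl succ_ae (tail_be X FX geX).
- have [_ _ /(_ b ltba)[N0 /(_ N0 (leqnn _))[c [Ac ltbc]]]] := hA lim_a.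
  have [N1 tail_bc] := IH c (approx_lt lim_a Ac) b ltbc.
  exists (maxn N0 N1) => X FX geX; apply: F_limit_intro lim_a _ Ac _.
    by move=> x /geX; apply: leq_trans (leq_maxl _ _).
  by apply: tail_bc FX _ => x /geX; apply: leq_trans (leq_maxr _ _).
Qed.

Lemma rank_empty_ge d : rank_ge (F d) fset0 d.
Proof.
elim/(well_founded_ind lt_wf): d => d IH; apply/rank_geP; split=> [|b ltbd N].
  exact: F_empty.
have [zero_d|[[e [lted pred_e]]|lim_d]] := zero_succ_or_limit d.
- by case: (zero_d b).
- exists N; split=> //.
  have rank_e : rank_ge (F e) fset0 b.
    apply: rank_ge_lower (IH e lted) => x ltxb.
    by case: (pred_e b ltbd) => [<-|/(lt_trans ltxb)].
  apply: (rank_ge_transport (f := fun X => N |` X) (g := id)) rank_e.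
  + by move=> X; apply: F_succ_add.
  + by exists 0 => j _; split=> //; rewrite fsetUCA.
- have [_ _ /(_ b ltbd)[N0 /(_ (maxn N N0) (leq_maxr _ _))[c [Ac ltbc]]]] := hA lim_d.
  have /rank_geP[_ /(_ b ltbc (maxn N N0))[j [le_Nj rank_j]]] := IH c (approx_lt lim_d Ac).
  exists j; split; first exact: leq_trans (leq_maxl _ _) le_Nj.
  have Ac_j := approx_mono lim_d Ac le_Nj.
  rewrite fsetU0 in rank_j *.
  apply: rank_ge_sub (rank_ge_restrict (least_fset1 j) _ rank_j).
    by move=> X [FX [_ minX]]; apply: F_limit_intro lim_d minX Ac_j FX.
  by move=> X j' least_X; apply: least_fsetU1.
Qed.

Lemma rank_singleton_lt d k c : rank_ge (F d) [fset k] c -> lt c d.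
Proof.
elim/(well_founded_ind lt_wf): d k c => d IH k c rank_k.
have rank_least := rank_ge_restrict (least_fset1 k)
  (fun X j least_X le_kj => least_fsetU1 least_X le_kj) rank_k.
have [zero_d|[[e succ_de]|lim_d]] := zero_succ_or_limit d.
- have /rank_geP[/(hF.1 d zero_d)/fsetP/(_ k)] := rank_k.
  by rewrite !inE eqxx.
- have rank_e : rank_ge (F e) ([fset k] `\ k) c.
    apply: (rank_ge_transport (f := fun X => X `\ k) (g := id)) rank_least.
    + by move=> X [FX least_X]; apply: F_succ_behead succ_de FX least_X.
    + exists k.+1 => j lt_kj; split=> //; apply/fsetP=> x; rewrite !inE.
      by case: (eqVneq x j) => // ->; rewrite gtn_eqF.
  rewrite fsetDv in rank_e.
  have not_ltec := rank_ge_empty_bound (IH e succ_de.1) rank_e.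
  have [ltce|[->|/not_ltec//]] := lt_total c e; last exact: succ_de.1.
  exact: lt_trans ltce succ_de.1.
- have cover X : F d X /\ least k X -> exists i, List.In i (A d k) /\ F i X.
    by move=> [FX least_X]; have [i Ai FiX] := F_limit_least lim_d FX least_X; exists i.
  have [i [Ai rank_i]] := rank_ge_split_seq
    (fun i X j FX => F_sub FX (fsubsetU1 _ _)) cover rank_least.
  have ltid := approx_lt lim_d Ai.
  exact: lt_trans (IH i ltid k c rank_i) ltid.
Qed.

End Family.

Section TwoFamilies.

Variables (A B : O -> nat -> seq O) (F G : O -> {fset nat} -> Prop).
Hypotheses (hA : approx_family lt A) (hF : transfinite_family lt A F).
Hypotheses (hB : approx_family lt B) (hG : transfinite_family lt B G).

Lemma image_in_family a : exists phi : nat -> nat, forall n E,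
  G a E -> (forall i, i \in E -> phi i <= n i) -> F a (fam_image n E).
Proof.
elim/(well_founded_ind lt_wf): a => a IH.
have F_image0 n : F a (fam_image n fset0).
  by rewrite fam_image0; apply: F_empty hF a.
have [zero_a|[[b succ_ab]|lim_a]] := zero_succ_or_limit a.
- by exists id => n E /(hG.1 a zero_a) -> _.
- have [phi phi_spec] := IH b succ_ab.1.
  exists phi => n E /(hG.2.1 a b succ_ab)[->|[p [E' [GE' ->]]]] dom //.
  have dom' i : i \in E' -> phi i <= n i by move=> E'i; apply: dom; rewrite !inE E'i orbT.
  by rewrite fam_imageU1; apply: (F_succ_add hF (n p) succ_ab (phi_spec n E' GE' dom')).
- have tail e : exists psi : nat -> nat, lt e a -> forall n E,
      G e E -> (forall i, i \in E -> psi i <= n i) -> F a (fam_image n E).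
    have [ltea|] := classic (lt e a); last by exists id.
    have [phi phi_spec] := IH e ltea.
    have [N tail_ea] := F_tail_incl hA hF ltea.
    exists (fun i => maxn N (phi i)) => _ n E GE dom.
    apply: tail_ea (phi_spec n E GE _) _ => [i /dom|x /imfsetP[i /= Ei ->]].
      exact: leq_trans (leq_maxr _ _).
    exact: leq_trans (leq_maxl _ _) (dom i Ei).
  have [psi psi_spec] := choice _ tail.
  (* Diagonalise over the finitely many [e] in [B_a(i)]. *)
  exists (fun i => \max_(e <- B a i) psi e i) => n E GE dom.
  have [/eqP->|/fset0Pn[x /exists_least[k least_E]]] := boolP (E == fset0) => //.
  have [e Be GeE] := F_limit_least hG lim_a GE least_E.
  apply: (psi_spec e (approx_lt hB lim_a Be) n E GeE) => i Ei.
  apply: leq_trans (dom i Ei).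
  exact: leq_bigmax_In (approx_mono hB lim_a Be (least_E.2 i Ei)).
Qed.

Lemma F_large a (P : nat -> Prop) : large G a (F a) P.
Proof.
move=> m incr_m _.
have [phi phi_spec] := image_in_family a.
have [psi [incr_psi le_phi_psi]] := incr_above phi.
exists (m \o psi); split=> [i|i|E GE].
- exact: homo_ltn ltn_trans incr_m _ _ (incr_psi i).
- by exists (psi i).
- apply: phi_spec GE _ => i _.
  exact: leq_trans (le_phi_psi i) (incr_ge incr_m _).
Qed.

Lemma F_not_large_above a b (L : nat -> Prop) :
  infinite_set L -> lt a b -> ~ large G b (F a) L.
Proof.
move=> infL ltab large_b.
have [m [incr_m Lm]] := infinite_set_enum infL.
have [n [incr_n _ n_image]] := large_b m incr_m Lm.
have rank_Fa : rank_ge (F a) (fam_image n fset0) b.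
  apply: (rank_ge_transport (f := fam_image n) (g := n)) (rank_empty_ge hB hG b) => //.
  by move=> X; exists 0 => j _; rewrite fam_imageU1; split=> //; apply: incr_ge.
rewrite fam_image0 in rank_Fa.
exact: rank_ge_empty_bound (rank_singleton_lt hA hF (d := a)) rank_Fa ltab.
Qed.

End TwoFamilies.
End TransfiniteFamilies.

Theorem corollary4 (O : Type) (lt : O -> O -> Prop)
    (hO : countable_wellorder lt)
    (A : O -> nat -> seq O) (F : O -> {fset nat} -> Prop)
    (hA : approx_family lt A) (hF : transfinite_family lt A F)
    (B : O -> nat -> seq O) (G : O -> {fset nat} -> Prop)
    (hB : approx_family lt B) (hG : transfinite_family lt B G)
    (a : O) (L : nat -> Prop) (hL : infinite_set L) :
  is_sup lt (fun b => large G b (F a) L) a.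
Proof.
have [lt_irrefl lt_trans lt_total lt_wf _] := hO.
split=> [b large_b ltab|c upper ltca].
- exact: (F_not_large_above lt_trans lt_total lt_irrefl lt_wf hA hF hB hG hL ltab large_b).
- exact: upper a (F_large lt_wf hA hF hB hG a (P := L)) ltca.
Qed.
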